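(* Let $R$ be a ring and $\mathcal{L},\mathcal{K}$ classes of $R$-modules such that $\mathrm{Ext}^1_R(K,L)=0$ for all $K\in\mathcal{K}$, $L\in\mathcal{L}$, every projective module lies in $\mathcal{L}$, and $\mathcal{L}$ is closed under finite direct sums and kernels of epimorphisms. Let $f:M\to N$ be an $R$-linear map and let $0\to L\xrightarrow{\iota}K\xrightarrow{p}M\to0$ and $0\to L'\xrightarrow{\jmath}K'\xrightarrow{q}N\to0$ be exact sequences with $K,K'\in\mathcal{K}$ and $L,L'\in\mathcal{L}$. Then: (i) there exists an $R$-linear map $g:K\to K'$ with $qg=fp$; (ii) if $g,g':K\to K'$ are $R$-linear maps with $qg=fp=qg'$, then $[g]=[g']$ in $\mathfrak{L}\text{-}\mathrm{Hom}_R(K,K')$; (iii) if $[f]=[0]$ in $\mathfrak{L}\text{-}\mathrm{Hom}_R(M,N)$ and $g:K\to K'$ is an $R$-linear map with $qg=fp$, then $[g]=[0]$ in $\mathfrak{L}\text{-}\mathrm{Hom}_R(K,K')$.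
   Context: Modules are left $R$-modules. $\mathfrak{L}\text{-}\mathrm{Hom}_R(X,Y)$ denotes the quotient of $\mathrm{Hom}_R(X,Y)$ by the subgroup of $R$-linear maps factoring through a module in $\mathcal{L}$, and $[h]$ the class of a map $h$ therein. *)

(* modules over a ring R are MathComp's lmodType R (left modules). *)
From HB Require Import structures.
From mathcomp Require Import all_boot all_order all_algebra.
Set Implicit Arguments. Unset Strict Implicit. Unset Printing Implicit Defensive.
Import GRing.Theory.
Local Open Scope ring_scope.

Section ModDefs.
Variable R : pzRingType.

Definition short_exact (A B C : lmodType R)
  (i : {linear A -> B}) (p : {linear B -> C}) : Prop :=
  injective i /\ (forall c : C, exists b : B, p b = c) /\
  (forall b : B, p b = 0 <-> exists a : A, b = i a).

Definition projective (P : lmodType R) : Prop :=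
  forall (A B : lmodType R) (e : {linear A -> B}) (h : {linear P -> B}),
    (forall b : B, exists a : A, e a = b) ->
    exists l : {linear P -> A}, forall x, e (l x) = h x.

(* Ext^1_R(K, L) = 0, via Yoneda: every extension 0 -> L -> E -> K -> 0 splits. *)
Definition Ext1_zero (K L : lmodType R) : Prop :=
  forall (E : lmodType R) (i : {linear L -> E}) (pi : {linear E -> K}),
    short_exact i pi ->
    exists s : {linear K -> E}, forall x, pi (s x) = x.

Definition dsum_closed (C : lmodType R -> Prop) : Prop :=
  forall A B : lmodType R, C A -> C B -> C (A * B)%type.

(* closure under kernels of epimorphisms: if 0 -> A -> B -> D -> 0 is exact
   with B, D in the class then A is in the class (A is the kernel up to iso). *)
Definition ker_epi_closed (C : lmodType R -> Prop) : Prop :=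
  forall (A B D : lmodType R) (i : {linear A -> B}) (p : {linear B -> D}),
    short_exact i p -> C B -> C D -> C A.

(* [h] = [h'] in L-Hom_R(U,V): h - h' factors through a module of the class. *)
Definition LHom_eq (C : lmodType R -> Prop) (U V : lmodType R)
  (h h' : U -> V) : Prop :=
  exists X : lmodType R, C X /\
    exists (a : {linear U -> X}) (b : {linear X -> V}),
      forall x, h x - h' x = b (a x).
End ModDefs.

(* (i) is the lifting property against q that Ext^1(K, L') = 0 yields, by
   splitting the pullback of q along f p.  (ii) holds because the difference
   of two lifts lands in ker q = L'.  For (iii) write f = b a through X in L
   and cover X by a free module F whose kernel W is in L; Ext^1(K, W) = 0 lifts
   a p to K -> F and projectivity lifts b along q to F -> K'.  The composite g0
   is a lift of f p factoring through F, so g = (g - g0) + g0 factors through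
   L' (+) F. *)
From HB Require Import structures.
From mathcomp Require Import all_boot all_order all_algebra.
From mathcomp Require Import finmap.
From mathcomp.multinomials Require Import monalg.
Set Implicit Arguments. Unset Strict Implicit. Unset Printing Implicit Defensive.
Import GRing.Theory.
Local Open Scope fset_scope.
Local Open Scope ring_scope.

Definition mkLinear (R : pzRingType) (U V : lmodType R) (f : U -> V)
  (fL : linear f) : {linear U -> V} :=
  HB.pack f (GRing.isLinear.Build R U V *:%R f fL).

Section Kernel.
Variables (R : pzRingType) (U V : lmodType R) (f : {linear U -> V}).

Definition ker_pred : {pred U} := fun u => f u == 0.

Fact ker_subsemimod_closed : subsemimod_closed ker_pred.
Proof.
split; [split|] => [|u v|a u]; rewrite !unfold_in /= ?linear0 //.
  by move=> /eqP fu /eqP fv; rewrite linearD fu fv addr0.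
by move=> /eqP fu; rewrite linearZZ fu scaler0.
Qed.

HB.instance Definition _ :=
  GRing.isSubmodClosed.Build R U ker_pred ker_subsemimod_closed.

Record ker_lmod := KerLmod { ker_val : U; _ : ker_val \in ker_pred }.
HB.instance Definition _ := [isSub for ker_val].
HB.instance Definition _ := [Choice of ker_lmod by <:].
HB.instance Definition _ := [SubChoice_isSubLmodule of ker_lmod by <:].

Lemma ker_lmodP (u : ker_lmod) : f (val u) = 0.
Proof. exact/eqP/(valP u). Qed.

Lemma ker_lmod_exact : (forall v, exists u, f u = v) ->
  short_exact (val : {linear ker_lmod -> U}) f.
Proof.
move=> f_surj; split; [exact: val_inj | split => // u].
split=> [/eqP fu0 | [w ->]]; last exact: ker_lmodP.
by exists (KerLmod fu0).
Qed.

End Kernel.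

Section ShortExact.
Variables (R : pzRingType) (A B C : lmodType R).
Variables (i : {linear A -> B}) (p : {linear B -> C}).
Hypothesis exact_ip : short_exact i p.

Lemma short_exact_factor_ker (U : lmodType R) (u : {linear U -> B}) :
  (forall x, p (u x) = 0) ->
  exists v : {linear U -> A}, forall x, u x = i (v x).
Proof.
case: exact_ip => [i_inj [_ ker_p]] pu0.
have lift x : exists a, i a == u x.
  by have [a ->] := (ker_p _).1 (pu0 x); exists a.
pose v x := xchoose (lift x).
have vK x : i (v x) = u x by exact/eqP/(xchooseP (lift x)).
have v_lin : linear v.
  by move=> c x y; apply: i_inj; rewrite linearP !vK linearP.
by exists (mkLinear v_lin) => x; rewrite /= vK.
Qed.

End ShortExact.

Section Pullback.
Variables (R : pzRingType) (A B C : lmodType R).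
Variables (i : {linear A -> B}) (p : {linear B -> C}).
Hypothesis exact_ip : short_exact i p.

Section PullbackAlong.
Variables (K : lmodType R) (h : {linear K -> C}).

Definition pullback := ker_lmod ((h \o fst) \- (p \o snd)).

Lemma pullbackP (z : pullback) : h (val z).1 = p (val z).2.
Proof. exact/subr0_eq/(ker_lmodP z). Qed.

Lemma pullback_exact :
  exists j : {linear A -> pullback}, short_exact j (fst \o val).
Proof.
case: exact_ip => [i_inj [p_surj ker_p]].
have d_surj z : exists y, ((h \o fst) \- (p \o snd)) y = z.
  have [y py] := p_surj (- z).
  by exists (0, y); rewrite /= linear0 py sub0r opprK.
have incl_lin : linear (fun a : A => (0 : K, i a)).
  by move=> c a b; rewrite linearP; congr (_, _); rewrite /= scaler0 addr0.
have p_i0 a : p (i a) = 0 by apply/ker_p; exists a.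
have incl0 a : ((h \o fst) \- (p \o snd)) (mkLinear incl_lin a) = 0.
  by rewrite /= linear0 p_i0 subrr.
have [j jK] := short_exact_factor_ker (ker_lmod_exact d_surj) incl0.
exists j; split; [|split].
- move=> a b jab; apply: i_inj.
  by have := jK a; rewrite jab -jK => /(congr1 snd).
- move=> k; have [y py] := p_surj (h k).
  have ky : (k, y) \in ker_pred ((h \o fst) \- (p \o snd)).
    by rewrite unfold_in /= py subrr.
  by exists (KerLmod ky).
- move=> z; split=> [z1 | [a ->]]; last exact: esym (congr1 fst (jK a)).
  have {}z1 : (val z).1 = 0 by [].
  have [a ya] : exists a, (val z).2 = i a.
    by apply/ker_p; rewrite -pullbackP z1 linear0.
  by exists a; apply: val_inj; rewrite -jK [val z]surjective_pairing z1 ya.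
Qed.

End PullbackAlong.

Lemma Ext1_zero_lift (K : lmodType R) : Ext1_zero K A ->
  forall h : {linear K -> C},
  exists l : {linear K -> B}, forall x, p (l x) = h x.
Proof.
move=> ExtKA h; have [j exact_j] := pullback_exact h.
have [s sK] := ExtKA _ _ _ exact_j.
exists (snd \o val \o s) => x.
by move: (pullbackP (s x)) (sK x) => /= <- ->.
Qed.

End Pullback.

(* monalg makes [malg] a module only over nonzero rings; R may be trivial. *)
Section FreeModule.
Variables (R : pzRingType) (X : choiceType).

Definition free_lmod := malg X R.
HB.instance Definition _ := GRing.Zmodule.on free_lmod.

Implicit Types (g : free_lmod) (c : R) (k : X).

Definition free_scale c g : free_lmod := [malg k in msupp g => c * g@_k].

Lemma free_scaleE c g k : (free_scale c g)@_k = c * g@_k.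
Proof. by rewrite mcoeffE; case: msuppP; rewrite ?mulr0. Qed.

Lemma free_scaleA c1 c2 g :
  free_scale c1 (free_scale c2 g) = free_scale (c1 * c2) g.
Proof. by apply/malgP => k; rewrite !free_scaleE mulrA. Qed.

Lemma free_scale1 : left_id 1 free_scale.
Proof. by move=> g; apply/malgP => k; rewrite free_scaleE mul1r. Qed.

Lemma free_scaleDr c : {morph free_scale c : g1 g2 / g1 + g2}.
Proof.
by move=> g1 g2; apply/malgP => k; rewrite !(mcoeffD, free_scaleE) mulrDr.
Qed.

Lemma free_scaleDl g : {morph free_scale^~ g : c1 c2 / c1 + c2}.
Proof.
by move=> c1 c2; apply/malgP => k; rewrite !(mcoeffD, free_scaleE) mulrDl.
Qed.

HB.instance Definition _ := GRing.Zmodule_isLmodule.Build R free_lmod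
  free_scaleA free_scale1 free_scaleDr free_scaleDl.

Lemma free_coeffZ c g k : (c *: g)@_k = c * g@_k.
Proof. exact: free_scaleE. Qed.

Lemma free_msuppZ_le c g : msupp (c *: g) `<=` msupp g.
Proof.
apply/fsubsetP => k; rewrite -!mcoeff_neq0 free_coeffZ.
by apply: contraNneq => ->; rewrite mulr0.
Qed.

Lemma free_unitZ c k : c *: (<< k >> : free_lmod) = << c *g k >>.
Proof. by apply/malgP => k'; rewrite free_coeffZ !mcoeffU mulr_natr. Qed.

Section Extension.
Variables (V : lmodType R) (phi : X -> V).

Definition free_ext g : V := \sum_(k <- msupp g) g@_k *: phi k.

Lemma free_extEw (d : {fset X}) g : msupp g `<=` d ->
  free_ext g = \sum_(k <- d) g@_k *: phi k.
Proof.
move=> le_gd; rewrite /free_ext (big_fset_incl _ le_gd) // => k _.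
by move/mcoeff_outdom ->; rewrite scale0r.
Qed.

Lemma free_ext_is_linear : linear free_ext.
Proof.
move=> c g1 g2; set d := msupp g1 `|` msupp g2.
have le1 : msupp g1 `<=` d by rewrite fsubsetUl.
have le2 : msupp g2 `<=` d by rewrite fsubsetUr.
have le3 : msupp (c *: g1 + g2) `<=` d.
  apply: fsubset_trans (msuppD_le _ _) _.
  by rewrite fsetSU // (fsubset_trans (free_msuppZ_le _ _)).
rewrite (free_extEw le1) (free_extEw le2) (free_extEw le3).
rewrite scaler_sumr -big_split; apply: eq_bigr => k _.
by rewrite mcoeffD free_coeffZ scalerDl scalerA.
Qed.

HB.instance Definition _ :=
  GRing.isLinear.Build R free_lmod V *:%R free_ext free_ext_is_linear.

Lemma free_extU c k : free_ext << c *g k >> = c *: phi k.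
Proof. by rewrite (free_extEw msuppU_le) big_seq_fset1 mcoeffUU. Qed.

End Extension.

Lemma eq_free_ext (V : lmodType R) (phi psi : X -> V) :
  phi =1 psi -> free_ext phi =1 free_ext psi.
Proof. by move=> eq_phi g; apply: eq_bigr => k _; rewrite eq_phi. Qed.

Lemma free_ext_unique (V : lmodType R) (h : {linear free_lmod -> V}) :
  h =1 free_ext (fun k => h << k >>).
Proof.
move=> g; rewrite {1}[g]monalgE linear_sum; apply: eq_bigr => k _.
by rewrite -free_unitZ linearZ.
Qed.

Lemma free_lmod_projective : projective free_lmod.
Proof.
move=> A B e h e_surj.
have lift k : exists a, e a == h << k >>.
  by have [a <-] := e_surj (h << k >>); exists a.
pose a k := xchoose (lift k).
exists (free_ext a) => g.
transitivity (free_ext (fun k => e (free_ext a << k >>)) g).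
  exact: free_ext_unique (e \o free_ext a) g.
rewrite [RHS]free_ext_unique.
apply: eq_free_ext => k /=; rewrite free_extU scale1r.
exact/eqP/(xchooseP (lift k)).
Qed.

End FreeModule.

Lemma free_ext_id_surj (R : pzRingType) (V : lmodType R) (v : V) :
  exists g : free_lmod R V, free_ext idfun g = v.
Proof. by exists << v >>; rewrite free_extU scale1r. Qed.

Section FactorThrough.
Variables (R : pzRingType) (LC : lmodType R -> Prop).

Lemma LHom_eq_trans (U V : lmodType R) (h1 h2 h3 : U -> V) :
  dsum_closed LC -> LHom_eq LC h1 h2 -> LHom_eq LC h2 h3 -> LHom_eq LC h1 h3.
Proof.
move=> hsum [X1 [CX1 [a1 [b1 e1]]]] [X2 [CX2 [a2 [b2 e2]]]].
have a_lin : linear (fun x => (a1 x, a2 x)) by move=> c x y; rewrite !linearP.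
exists (X1 * X2)%type; split; first exact: hsum.
exists (mkLinear a_lin), ((b1 \o fst) \+ (b2 \o snd)) => x /=.
by rewrite -e1 -e2 addrA subrK.
Qed.

Lemma LHom_eq_lifts (K K' L' N : lmodType R) (j : {linear L' -> K'})
  (q : {linear K' -> N}) (g g' : {linear K -> K'}) :
  LC L' -> short_exact j q -> (forall x, q (g x) = q (g' x)) -> LHom_eq LC g g'.
Proof.
move=> CL' exact_jq qgg'.
have qgg'0 x : q ((g \- g') x) = 0 by rewrite /= linearB qgg' subrr.
have [h hK] := short_exact_factor_ker exact_jq qgg'0.
by exists L'; split => //; exists h, j.
Qed.

Lemma LHom_null_lift (K K' N : lmodType R) (q : {linear K' -> N})
  (u : {linear K -> N}) :
  (forall W, LC W -> Ext1_zero K W) ->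
  (forall P, projective P -> LC P) -> ker_epi_closed LC ->
  (forall n, exists k', q k' = n) -> LHom_eq LC u (fun _ => 0) ->
  exists g0 : {linear K -> K'},
    (forall x, q (g0 x) = u x) /\ LHom_eq LC g0 (fun _ => 0).
Proof.
move=> hExt hproj hker q_surj [X [CX [a [b uab]]]].
pose ev : {linear free_lmod R X -> X} := free_ext idfun.
have exact_ev := ker_lmod_exact (@free_ext_id_surj R X).
have CF : LC (free_lmod R X) by exact/hproj/free_lmod_projective.
have CW : LC (ker_lmod ev) := hker _ _ _ _ _ exact_ev CF CX.
have [phi phiK] := Ext1_zero_lift exact_ev (hExt _ CW) a.
have [c cK] := free_lmod_projective (b \o ev) q_surj.
exists (c \o phi); split=> [x|].
  by rewrite /= cK /= phiK -[u x]subr0 uab.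
by exists (free_lmod R X); split=> //; exists phi, c => x; rewrite subr0.
Qed.

End FactorThrough.

Theorem lemma3p1 (R : pzRingType) (LC KC : lmodType R -> Prop)
  (hExt : forall K L : lmodType R, KC K -> LC L -> Ext1_zero K L)
  (hproj : forall P : lmodType R, projective P -> LC P)
  (hsum : dsum_closed LC) (hker : ker_epi_closed LC)
  (M N K L K' L' : lmodType R) (f : {linear M -> N})
  (iota : {linear L -> K}) (p : {linear K -> M})
  (j : {linear L' -> K'}) (q : {linear K' -> N})
  (ex1 : short_exact iota p) (ex2 : short_exact j q)
  (hK : KC K) (hK' : KC K') (hL : LC L) (hL' : LC L') :
  (exists g : {linear K -> K'}, forall x, q (g x) = f (p x)) /\
  (forall g g' : {linear K -> K'},
      (forall x, q (g x) = f (p x)) -> (forall x, q (g' x) = f (p x)) ->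
      LHom_eq LC g g') /\
  (LHom_eq LC f (fun _ => 0) ->
   forall g : {linear K -> K'}, (forall x, q (g x) = f (p x)) ->
      LHom_eq LC g (fun _ => 0)).
Proof.
have lifts_equiv (g g' : {linear K -> K'}) :
    (forall x, q (g x) = f (p x)) -> (forall x, q (g' x) = f (p x)) ->
    LHom_eq LC g g'.
  by move=> gK g'K; apply: (LHom_eq_lifts hL' ex2) => x; rewrite gK g'K.
split; last split=> //.
  have [g gK] := Ext1_zero_lift ex2 (hExt _ _ hK hL') (f \o p).
  by exists g.
move=> [X [CX [a [b fab]]]] g gK.
have fp0 : LHom_eq LC (f \o p) (fun _ => 0).
  by exists X; split=> //; exists (a \o p), b => x; rewrite /= -fab.
have [_ [q_surj _]] := ex2.
have [g0 [g0K g00]] := LHom_null_lift (hExt _^~ hK) hproj hker q_surj fp0.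
exact: LHom_eq_trans hsum (lifts_equiv g g0 gK g0K) g00.
Qed.
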